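(* Let $(M,P,g)$ be a 4-dimensional Riemannian almost product manifold with $\operatorname{tr}P=0$ and let $L$ be any Riemannian $P$-tensor on $M$. Then at every point: (1) $\rho(L)=\frac14\{\tau(L)\,g+\tau^*(L)\,\widetilde g\}$ (i.e. $M$ is almost Einstein with respect to $L$); (2) for every pair of orthonormal vectors $x,y$ spanning a totally real 2-plane (i.e. $g(x,Px)=g(x,Py)=g(y,Px)=g(y,Py)=0$) one has $L(x,y,y,x)=\tau(L)/8$, so the totally real sectional curvature with respect to $L$ is pointwise constant; (3) for every unit vector $x$ with $g(x,Px)=0$ (so that $\mathrm{span}\{x,Px\}$ is an invariant 2-plane) one has $L(x,Px,Px,x)=0$.
   Context: A Riemannian almost product manifold $(M,P,g)$: $M$ smooth, $P$ a $(1,1)$-tensor field with $P^2=\mathrm{id}$, $g$ Riemannian with $g(Px,Py)=g(x,y)$. A curvature-like tensor is a $(0,4)$-tensor $L$ with $L(x,y,z,w)=-L(y,x,z,w)=-L(x,y,w,z)$ and $L(x,y,z,w)+L(y,z,x,w)+L(z,x,y,w)=0$; it is a Riemannian $P$-tensor if moreover $L(x,y,Pz,Pw)=L(x,y,z,w)$. $\widetilde g(x,y)=g(x,Py)$. With $g^{ij}$ the inverse matrix of $g$ in a basis $\{e_i\}$: $\rho(L)(y,z)=\sum g^{ij}L(e_i,y,z,e_j)$, $\tau(L)=\sum g^{ij}\rho(L)(e_i,e_j)$, $\rho^*(L)(y,z)=\sum g^{ij}L(e_i,y,z,Pe_j)$, $\tau^*(L)=\sum g^{ij}\rho^*(L)(e_i,e_j)$.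 *)

(* Pointwise (tangent-space) linear algebra of a Riemannian
   almost product manifold, in a basis {e_i} of T_pM = R^n (column vectors). *)
From HB Require Import structures.
From mathcomp Require Import all_boot all_order all_algebra.
Set Implicit Arguments. Unset Strict Implicit. Unset Printing Implicit Defensive.
Import Order.TTheory GRing.Theory Num.Theory.
Local Open Scope ring_scope.

Definition evec (R : rcfType) (n : nat) (i : 'I_n) : 'cV[R]_n := delta_mx i ord0.

Definition bil (R : rcfType) (n : nat) (G : 'M[R]_n) (x y : 'cV[R]_n) : R :=
  (x^T *m G *m y) ord0 ord0.

Definition tens4 (R : rcfType) (n : nat) (Lc : 'I_n -> 'I_n -> 'I_n -> 'I_n -> R)
  (x y z w : 'cV[R]_n) : R :=
  \sum_(i < n) \sum_(j < n) \sum_(k < n) \sum_(l < n)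
     Lc i j k l * x i ord0 * y j ord0 * z k ord0 * w l ord0.

Definition gtilde (R : rcfType) (n : nat) (G P : 'M[R]_n) (x y : 'cV[R]_n) : R :=
  bil G x (P *m y).

Definition RAP_structure (R : rcfType) (n : nat) (G P : 'M[R]_n) : Prop :=
  [/\ G^T = G,
      (forall x : 'cV[R]_n, x != 0 -> 0 < bil G x x),
      P *m P = 1%:M &
      (forall x y : 'cV[R]_n, bil G (P *m x) (P *m y) = bil G x y)].

Definition curvature_like (R : rcfType) (n : nat)
  (Lc : 'I_n -> 'I_n -> 'I_n -> 'I_n -> R) : Prop :=
  [/\ (forall x y z w, tens4 Lc x y z w = - tens4 Lc y x z w),
      (forall x y z w, tens4 Lc x y z w = - tens4 Lc x y w z) &
      (forall x y z w, tens4 Lc x y z w + tens4 Lc y z x w + tens4 Lc z x y w = 0)].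

Definition riemannian_P_tensor (R : rcfType) (n : nat) (P : 'M[R]_n)
  (Lc : 'I_n -> 'I_n -> 'I_n -> 'I_n -> R) : Prop :=
  curvature_like Lc /\
  (forall x y z w, tens4 Lc x y (P *m z) (P *m w) = tens4 Lc x y z w).

Definition rho (R : rcfType) (n : nat) (G : 'M[R]_n)
  (Lc : 'I_n -> 'I_n -> 'I_n -> 'I_n -> R) (y z : 'cV[R]_n) : R :=
  \sum_(i < n) \sum_(j < n) invmx G i j * tens4 Lc (evec R i) y z (evec R j).

Definition tau (R : rcfType) (n : nat) (G : 'M[R]_n)
  (Lc : 'I_n -> 'I_n -> 'I_n -> 'I_n -> R) : R :=
  \sum_(i < n) \sum_(j < n) invmx G i j * rho G Lc (evec R i) (evec R j).

Definition rhostar (R : rcfType) (n : nat) (G P : 'M[R]_n)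
  (Lc : 'I_n -> 'I_n -> 'I_n -> 'I_n -> R) (y z : 'cV[R]_n) : R :=
  \sum_(i < n) \sum_(j < n) invmx G i j * tens4 Lc (evec R i) y z (P *m evec R j).

Definition taustar (R : rcfType) (n : nat) (G P : 'M[R]_n)
  (Lc : 'I_n -> 'I_n -> 'I_n -> 'I_n -> R) : R :=
  \sum_(i < n) \sum_(j < n) invmx G i j * rhostar G P Lc (evec R i) (evec R j).

From HB Require Import structures.
From mathcomp Require Import all_boot all_order all_algebra.
From mathcomp Require Import ring lra.
Set Implicit Arguments. Unset Strict Implicit. Unset Printing Implicit Defensive.
Import Order.TTheory GRing.Theory Num.Theory.
Local Open Scope ring_scope.

(* As P is a g-symmetric involution, T_pM = V+ (+) V- orthogonally, with
   x = x+ + x-, x+ = (x + Px)/2, x- = (x - Px)/2; tr P = 0 forces both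
   eigenspaces to be planes, so there is an orthonormal basis f0, f1 of V+,
   f2, f3 of V-.  P-invariance of L in its last pair and the Bianchi identity
   kill every mixed component, so L(x,y,z,w) = L(x+,y+,z+,w+) + L(x-,y-,z-,w-);
   on a plane a curvature-like tensor has constant sectional curvature, hence
     L = a R1(x+,y+,z+,w+) + b R1(x-,y-,z-,w-),
   a = L(f0,f1,f1,f0), b = L(f2,f3,f3,f2), R1 the unit constant-curvature tensor
   of g.  Contracting in the basis f gives rho = a g+ + b g-, rho* = a g+ - b g-,
   tau = 2(a + b), tau* = 2(a - b) with g+/- (y,z) = g(y+/-, z+/-)
   = (g +/- g~)(y,z)/2, and the three claims follow at once. *)

Section Multilinear.
Variables (R : rcfType) (n : nat).
Implicit Types (x y z w u v : 'cV[R]_n) (f : 'cV[R]_n -> R).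

Definition lin f := forall (a : R) u v, f (a *: u + v) = a * f u + f v.

Lemma linD f : lin f -> forall u v, f (u + v) = f u + f v.
Proof. by move=> hf u v; rewrite -[u in LHS]scale1r hf mul1r. Qed.

Lemma lin0 f : lin f -> f 0 = 0.
Proof. by move=> hf; apply: (addrI (f 0)); rewrite addr0 -linD ?addr0. Qed.

Lemma linZ f a u : lin f -> f (a *: u) = a * f u.
Proof. by move=> hf; rewrite -[a *: u]addr0 hf lin0 ?addr0. Qed.

Lemma linN f u : lin f -> f (- u) = - f u.
Proof. by move=> hf; rewrite -scaleN1r linZ // mulN1r. Qed.

Lemma lin_sum (I : Type) (r : seq I) (F : I -> 'cV[R]_n -> R) :
  (forall i, lin (F i)) -> lin (fun x => \sum_(i <- r) F i x).
Proof.
by move=> hF a u v; rewrite mulr_sumr -big_split; apply: eq_bigr => i _; rewrite hF.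
Qed.

Lemma lin_scale f c : lin f -> lin (fun x => c * f x).
Proof. by move=> hf a u v; rewrite hf mulrDr mulrCA. Qed.

Lemma lin_compmx f (A : 'M[R]_n) : lin f -> lin (fun x => f (A *m x)).
Proof. by move=> hf a u v; rewrite mulmxDr -scalemxAr hf. Qed.

Lemma lin_big f (I : Type) (r : seq I) (c : I -> R) (v : I -> 'cV[R]_n) :
  lin f -> f (\sum_(i <- r) c i *: v i) = \sum_(i <- r) c i * f (v i).
Proof.
move=> hf; elim/big_rec2: _ => [|i y1 y2 _ <-]; first exact: lin0.
by rewrite hf.
Qed.

Lemma lin_std f x : lin f -> f x = \sum_i x i 0 * f (evec R i).
Proof.
move=> hf; rewrite -lin_big // {1}(matrix_sum_delta x); congr f.
by apply: eq_bigr => i _; rewrite big_ord1.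
Qed.

Lemma tens4_lin (Lc : 'I_n -> 'I_n -> 'I_n -> 'I_n -> R) x y z w :
  [/\ lin (fun u => tens4 Lc u y z w), lin (fun u => tens4 Lc x u z w),
      lin (fun u => tens4 Lc x y u w) & lin (fun u => tens4 Lc x y z u)].
Proof.
split=> a u v; rewrite /tens4 mulr_sumr -big_split; apply: eq_bigr => i _;
rewrite mulr_sumr -big_split; apply: eq_bigr => j _;
rewrite mulr_sumr -big_split; apply: eq_bigr => k _;
rewrite mulr_sumr -big_split; apply: eq_bigr => l _; rewrite !mxE /=; ring.
Qed.

Lemma tens4_lin1 Lc y z w : lin (fun u => tens4 Lc u y z w).
Proof. by case: (tens4_lin Lc 0 y z w). Qed.
Lemma tens4_lin2 Lc x z w : lin (fun u => tens4 Lc x u z w).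
Proof. by case: (tens4_lin Lc x 0 z w). Qed.
Lemma tens4_lin3 Lc x y w : lin (fun u => tens4 Lc x y u w).
Proof. by case: (tens4_lin Lc x y 0 w). Qed.
Lemma tens4_lin4 Lc x y z : lin (fun u => tens4 Lc x y z u).
Proof. by case: (tens4_lin Lc x y z 0). Qed.

Lemma bil_lin (G : 'M[R]_n) x y :
  lin (fun u => bil G u y) /\ lin (fun u => bil G x u).
Proof.
split=> a u v; rewrite /bil.
- by rewrite linearD linearZ /= !mulmxDl -!scalemxAl !mxE.
- by rewrite mulmxDr -scalemxAr !mxE.
Qed.

Lemma rho_lin (G : 'M[R]_n) Lc y z :
  lin (fun u => rho G Lc u z) /\ lin (fun u => rho G Lc y u).
Proof.
split; apply: lin_sum => i; apply: lin_sum => j; apply: lin_scale.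
  exact: tens4_lin2.
exact: tens4_lin3.
Qed.

Lemma rhostar_lin (G P : 'M[R]_n) Lc y z :
  lin (fun u => rhostar G P Lc u z) /\ lin (fun u => rhostar G P Lc y u).
Proof.
split; apply: lin_sum => i; apply: lin_sum => j; apply: lin_scale.
  exact: tens4_lin2.
exact: tens4_lin3.
Qed.

End Multilinear.

Section EigenComponents.
Variables (R : rcfType) (n : nat).
Implicit Types (Q P : 'M[R]_n) (x u : 'cV[R]_n).

(* The component (x + Qx)/2 of x in the +1-eigenspace of an involution Q; the
   component in the -1-eigenspace is projP (-Q) x. *)
Definition projP Q x : 'cV[R]_n := 2^-1 *: (x + Q *m x).

Lemma projP_fixed Q x : Q *m Q = 1%:M -> Q *m projP Q x = projP Q x.
Proof. by move=> hQQ; rewrite /projP -scalemxAr mulmxDr mulmxA hQQ mul1mx addrC. Qed.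

Lemma projP_id Q u : Q *m u = u -> projP Q u = u.
Proof.
move=> hu; rewrite /projP hu -mulr2n -scaler_nat scalerA.
by rewrite mulVf ?scale1r // pnatr_eq0.
Qed.

Lemma projP_anti Q u : Q *m u = - u -> projP Q u = 0.
Proof. by move=> hu; rewrite /projP hu subrr scaler0. Qed.

Lemma projP_split P x : x = projP P x + projP (- P) x.
Proof.
rewrite /projP -scalerDr mulNmx addrACA subrr addr0 -mulr2n -scaler_nat scalerA.
by rewrite mulVf ?scale1r // pnatr_eq0.
Qed.

Lemma fixed_opp P u : - P *m u = u -> P *m u = - u.
Proof. by move=> hu; rewrite -[in RHS]hu mulNmx opprK. Qed.

Lemma projPN_anti P u : P *m u = u -> projP (- P) u = 0.
Proof. by move=> hu; apply: projP_anti; rewrite mulNmx hu. Qed.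

Lemma opp_involution P : P *m P = 1%:M -> (- P) *m (- P) = 1%:M.
Proof. by rewrite mulNmx mulmxN opprK. Qed.

Lemma projP_opp P x : P *m P = 1%:M -> P *m projP (- P) x = - projP (- P) x.
Proof. by move=> hPP; rewrite -{1}[P]opprK mulNmx projP_fixed // opp_involution. Qed.

End EigenComponents.

Section Metric.
Variables (R : rcfType) (n : nat) (G P : 'M[R]_n).
Hypothesis hGP : RAP_structure G P.
Implicit Types (x y u v : 'cV[R]_n).

Lemma bilD1 x y u : bil G (x + y) u = bil G x u + bil G y u.
Proof. exact: (linD (bil_lin G x u).1). Qed.
Lemma bilD2 x y u : bil G u (x + y) = bil G u x + bil G u y.
Proof. exact: (linD (bil_lin G u x).2). Qed.
Lemma bilZ1 a x y : bil G (a *: x) y = a * bil G x y.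
Proof. exact: (linZ _ _ (bil_lin G x y).1). Qed.
Lemma bilZ2 a x y : bil G x (a *: y) = a * bil G x y.
Proof. exact: (linZ _ _ (bil_lin G x y).2). Qed.
Lemma bilN1 x y : bil G (- x) y = - bil G x y.
Proof. exact: (linN _ (bil_lin G x y).1). Qed.
Lemma bilN2 x y : bil G x (- y) = - bil G x y.
Proof. exact: (linN _ (bil_lin G x y).2). Qed.
Lemma bil0l y : bil G 0 y = 0.
Proof. exact: (lin0 (bil_lin G 0 y).1). Qed.

Lemma bil_sym x y : bil G x y = bil G y x.
Proof.
have [hGT _ _ _] := hGP.
have e : x^T *m G *m y = (x^T *m G *m y)^T.
  by apply/matrixP => i j; rewrite (ord1 i) (ord1 j) [RHS]mxE.
by rewrite /bil e !trmx_mul trmxK hGT mulmxA.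
Qed.

(* P is g-self-adjoint, being an isometric involution. *)
Lemma bil_Pswap x y : bil G (P *m x) y = bil G x (P *m y).
Proof.
have [_ _ hPP hiso] := hGP.
by rewrite -{2}[x](mul1mx) -hPP -mulmxA hiso.
Qed.

Lemma eigen_orth u v : P *m u = u -> P *m v = - v -> bil G u v = 0.
Proof.
move=> hu hv; have := bil_Pswap u v; rewrite hu hv bilN2; lra.
Qed.

Lemma bil_projP x y :
  bil G (projP P x) (projP P y) = (bil G x y + gtilde G P x y) / 2.
Proof.
rewrite /projP /gtilde bilZ1 bilZ2 bilD1 !bilD2 [bil G (P *m x) y]bil_Pswap.
by have [_ _ _ ->] := hGP; field.
Qed.

Lemma bil_projPN x y :
  bil G (projP (- P) x) (projP (- P) y) = (bil G x y - gtilde G P x y) / 2.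
Proof.
rewrite /projP /gtilde bilZ1 bilZ2 bilD1 !bilD2 !mulNmx !bilN1 !bilN2.
by rewrite [bil G (P *m x) y]bil_Pswap; have [_ _ _ ->] := hGP; field.
Qed.

(* -P is again an almost product structure; it exchanges V+ and V-. *)
Lemma RAP_opp : RAP_structure G (- P).
Proof.
have [hGT hpos hPP hiso] := hGP; split=> //; first exact: opp_involution.
by move=> x y; rewrite !mulNmx -!scaleN1r bilZ1 bilZ2 hiso; ring.
Qed.

End Metric.

Section CurvatureLike.
Variables (R : rcfType) (n : nat) (Lc : 'I_n -> 'I_n -> 'I_n -> 'I_n -> R).
Hypothesis hC : curvature_like Lc.
Local Notation L := (tens4 Lc).

(* Pair symmetry, the classical consequence of the Bianchi identity. *)
Lemma tens4_pair_sym x y z w : L x y z w = L z w x y.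
Proof.
case: hC => hA hB hBi.
have := hBi y z x w; have := hBi z x w y; have := hBi x w y z; have := hBi w y z x.
have := hB z x w y; have := hB x w z y; have := hA w z x y; have := hB z w x y.
have := hB w y x z; have := hA y x w z; have := hB x y w z; have := hB y z w x.
lra.
Qed.

End CurvatureLike.

Section RiemannianPTensor.
Variables (R : rcfType) (n : nat) (P : 'M[R]_n).
Variable Lc : 'I_n -> 'I_n -> 'I_n -> 'I_n -> R.
Hypothesis hL : riemannian_P_tensor P Lc.
Local Notation L := (tens4 Lc).
Implicit Types (x y z w u v : 'cV[R]_n).

Lemma tens4_mixed34 x y u v : P *m u = u -> P *m v = - v -> L x y u v = 0.
Proof.
move=> hu hv; have := hL.2 x y u v; rewrite hu hv (linN _ (tens4_lin4 _ _ _ _)); lra.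
Qed.

(* By the Bianchi identity L also vanishes on the pairs (V+, V+, V-, V-). *)
Lemma tens4_cross u1 u2 v1 v2 :
  P *m u1 = u1 -> P *m u2 = u2 -> P *m v1 = - v1 -> P *m v2 = - v2 ->
  L u1 u2 v1 v2 = 0.
Proof.
move=> h1 h2 h3 h4; have [[_ _ hBi] _] := hL.
have := hBi u1 u2 v1 v2.
by rewrite (tens4_mixed34 _ _ h1 h4) (tens4_mixed34 _ _ h2 h4) !addr0.
Qed.

Hypothesis hPP : P *m P = 1%:M.
Local Notation pplus x := (projP P x).
Local Notation pminus x := (projP (- P) x).

Lemma tens4_split34 x y z w :
  L x y z w = L x y (pplus z) (pplus w) + L x y (pminus z) (pminus w).
Proof.
have [[_ hB _] _] := hL.
rewrite {1}(projP_split P z) {1}(projP_split P w).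
rewrite (linD (tens4_lin3 _ _ _ _)) !(linD (tens4_lin4 _ _ _ _)).
rewrite (tens4_mixed34 _ _ (projP_fixed _ hPP) (projP_opp _ hPP)) addr0.
rewrite [L x y (pminus z) _]hB.
by rewrite (tens4_mixed34 _ _ (projP_fixed _ hPP) (projP_opp _ hPP)) oppr0 add0r.
Qed.

Lemma tens4_split x y z w :
  L x y z w = L (pplus x) (pplus y) (pplus z) (pplus w)
            + L (pminus x) (pminus y) (pminus z) (pminus w).
Proof.
have hpair := tens4_pair_sym hL.1.
have hp x := projP_fixed x hPP; have hm x := projP_opp x hPP.
have hcross := tens4_cross (hp _) (hp _) (hm _) (hm _).
rewrite tens4_split34; congr (_ + _).
  by rewrite hpair (tens4_split34 (pplus z)) hcross addr0 hpair.
rewrite hpair (tens4_split34 (pminus z)) [L (pminus z) _ _ _]hpair.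
by rewrite hcross add0r hpair.
Qed.

Lemma tens4_invariant_plane x : L x (P *m x) (P *m x) x = 0.
Proof.
have [[_ hB _] hinv] := hL.
have := hinv x (P *m x) (P *m x) x; rewrite mulmxA hPP mul1mx hB; lra.
Qed.

End RiemannianPTensor.

Lemma trace_columns (R : rcfType) (n : nat) (A : 'M[R]_n) :
  \tr A = \sum_i (A *m evec R i) i 0.
Proof. by apply: eq_bigr => i _; rewrite /evec -colE [RHS]mxE. Qed.

Lemma trace_rank_one (R : rcfType) (n : nat) (A : 'M[R]_n) (u : 'cV[R]_n)
    (c : 'I_n -> R) (lam : R) :
  u != 0 -> A *m u = lam *: u -> (forall j, A *m evec R j = c j *: u) -> \tr A = lam.
Proof.
move=> hu0 hu hc.
have htr : \tr A = \sum_j c j * u j 0.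
  by rewrite trace_columns; apply: eq_bigr => j _; rewrite hc mxE.
have hAu : A *m u = (\sum_j c j * u j 0) *: u.
  rewrite {1}(matrix_sum_delta u) mulmx_sumr scaler_suml; apply: eq_bigr => j _.
  by rewrite big_ord1 -scalemxAr -/(evec R j) hc scalerA mulrC.
have : (lam - \sum_j c j * u j 0) *: u = 0 by rewrite scalerBl -hu hAu subrr.
by move/eqP; rewrite scaler_eq0 (negbTE hu0) orbF subr_eq0 htr => /eqP.
Qed.

Definition fixed_pair (R : rcfType) (n : nat) (G Q : 'M[R]_n) (u w : 'cV[R]_n) :=
  [/\ Q *m u = u, Q *m w = w, bil G u u = 1, bil G w w = 1 & bil G u w = 0].

Section FixedVectors.
Variables (R : rcfType) (n : nat) (G P : 'M[R]_n).
Hypothesis hGP : RAP_structure G P.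
Implicit Types (u v w : 'cV[R]_n).

(* (1 + P) maps onto the +1-eigenspace of P and acts there as 2; hence
   \tr (1 + P) is twice the dimension of that eigenspace. *)
Local Notation Q := (1%:M + P).

Lemma fixed_image v : P *m (Q *m v) = Q *m v.
Proof. by have [_ _ hPP _] := hGP; rewrite mulmxA mulmxDr mulmx1 hPP addrC. Qed.

Lemma fixed_vector_exists : \tr Q != 0 -> exists u, u != 0 /\ P *m u = u.
Proof.
move=> htr; case: (pickP (fun i => Q *m evec R i != 0)) => [i hi | hnone].
  by exists (Q *m evec R i); split; last exact: fixed_image.
move: htr; rewrite trace_columns big1 ?eqxx // => i _.
by move/negbFE/eqP: (hnone i) => ->; rewrite mxE.
Qed.

(* Gram-Schmidt inside the +1-eigenspace: unless it is a line, it contains a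
   nonzero vector orthogonal to any given one. *)
Lemma fixed_orthogonal_exists u : u != 0 -> P *m u = u -> \tr Q != 2%:R ->
  exists w, [/\ w != 0, P *m w = w & bil G u w = 0].
Proof.
move=> hu0 hu htr; have [_ hpos _ _] := hGP.
have guu : bil G u u != 0 by apply: lt0r_neq0; exact: hpos.
pose c j := bil G u (Q *m evec R j) / bil G u u.
case: (pickP (fun j => Q *m evec R j - c j *: u != 0)) => [j hj | hnone].
  exists (Q *m evec R j - c j *: u); split=> //.
    by rewrite mulmxBr -scalemxAr fixed_image hu.
  by rewrite bilD2 -scaleNr bilZ2 /c; field.
case/eqP: htr; apply: (trace_rank_one hu0 (c := c)).
  by rewrite mulmxDl mul1mx hu scaler_nat mulr2n.
by move=> j; move/negbFE: (hnone j); rewrite subr_eq0 => /eqP.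
Qed.

Lemma normalize v : v != 0 ->
  bil G ((Num.sqrt (bil G v v))^-1 *: v) ((Num.sqrt (bil G v v))^-1 *: v) = 1.
Proof.
move=> hv0; have [_ hpos _ _] := hGP; have gvv := hpos v hv0.
have hs : Num.sqrt (bil G v v) != 0 by rewrite gt_eqF // sqrtr_gt0.
rewrite bilZ1 bilZ2 -{3}(sqr_sqrtr (ltW gvv)); field; exact: hs.
Qed.

Lemma fixed_orthonormal_pair : 2%:R < \tr Q -> exists u w, fixed_pair G P u w.
Proof.
move=> htr.
have [u [hu0 hu]] : exists u, u != 0 /\ P *m u = u.
  by apply: fixed_vector_exists; rewrite gt_eqF // (lt_trans _ htr) ?ltr0n.
have [w [hw0 hw huw]] := fixed_orthogonal_exists hu0 hu (negbT (gt_eqF htr)).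
exists ((Num.sqrt (bil G u u))^-1 *: u), ((Num.sqrt (bil G w w))^-1 *: w).
split; [by rewrite -scalemxAr hu | by rewrite -scalemxAr hw
  | exact: normalize | exact: normalize | by rewrite bilZ1 bilZ2 huw !mulr0].
Qed.

End FixedVectors.

Section OrthonormalBasis.
Variables (R : rcfType) (n : nat) (G : 'M[R]_n) (f : 'I_n -> 'cV[R]_n).

Definition orthonormal_basis := forall p q, bil G (f p) (f q) = (p == q)%:R.
Hypothesis hON : orthonormal_basis.

Local Notation F := (\matrix_(i, p) f p i 0 : 'M[R]_n).

Lemma col_basis_mx p : col p F = f p.
Proof. by apply/matrixP => i k; rewrite (ord1 k) !mxE. Qed.

Lemma bil_basis_mx x p : (F^T *m G *m x) p 0 = bil G (f p) x.
Proof.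
have -> : forall M : 'cV[R]_n, M p 0 = row p M 0 0 by move=> M; rewrite mxE.
by rewrite !row_mul -tr_col col_basis_mx.
Qed.

Lemma basis_mx_orthonormal : F^T *m G *m F = 1%:M.
Proof.
apply/matrixP => p q.
have -> : forall M : 'M[R]_n, M p q = col q M p 0 by move=> M; rewrite !mxE.
by rewrite colE -mulmxA -colE col_basis_mx bil_basis_mx hON mxE.
Qed.

Lemma ortho_expand x : x = \sum_p bil G (f p) x *: f p.
Proof.
have hFF : F *m (F^T *m G) = 1%:M by apply: mulmx1C; exact: basis_mx_orthonormal.
apply/matrixP => i k; rewrite (ord1 k) summxE.
rewrite -[x in LHS]mul1mx -hFF -mulmxA mxE.
by apply: eq_bigr => p _; rewrite bil_basis_mx !mxE mulrC.
Qed.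

Lemma invmx_orthonormal i j : invmx G i j = \sum_p f p i 0 * f p j 0.
Proof.
have hFF : F *m F^T *m G = 1%:M.
  by rewrite -mulmxA; apply: mulmx1C; exact: basis_mx_orthonormal.
have [_ hG] := mulmx1_unit hFF.
by rewrite -[invmx G]mul1mx -hFF mulmxK // mxE; apply: eq_bigr => p _; rewrite !mxE.
Qed.

Lemma contraction (beta : 'cV[R]_n -> 'cV[R]_n -> R) :
  (forall v, lin (beta^~ v)) -> (forall u, lin (beta u)) ->
  \sum_i \sum_j invmx G i j * beta (evec R i) (evec R j) = \sum_p beta (f p) (f p).
Proof.
move=> h1 h2.
under eq_bigr => i _ do under eq_bigr => j _ do rewrite invmx_orthonormal mulr_suml.
under eq_bigr => i _ do rewrite exchange_big /=.
rewrite exchange_big /=; apply: eq_bigr => p _.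
rewrite (lin_std (f p) (h1 (f p))); apply: eq_bigr => i _.
rewrite (lin_std (f p) (h2 (evec R i))) mulr_sumr; apply: eq_bigr => j _; ring.
Qed.

End OrthonormalBasis.

Definition unit_curv (R : rcfType) (n : nat) (G : 'M[R]_n) (x y z w : 'cV[R]_n) : R :=
  bil G x w * bil G y z - bil G x z * bil G y w.

Lemma unit_curv0 (R : rcfType) (n : nat) (G : 'M[R]_n) (y z : 'cV[R]_n) :
  unit_curv G 0 y z 0 = 0.
Proof. by rewrite /unit_curv !bil0l !mul0r subrr. Qed.

Section Plane.
Variables (R : rcfType) (n : nat) (G : 'M[R]_n) (f0 f1 : 'cV[R]_n).
Hypothesis hsym : forall x y, bil G x y = bil G y x.
Hypotheses (h00 : bil G f0 f0 = 1) (h11 : bil G f1 f1 = 1) (h01 : bil G f0 f1 = 0).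
Implicit Types (u v : 'cV[R]_n).

Definition in_plane u := u = bil G f0 u *: f0 + bil G f1 u *: f1.

Local Notation c u := (bil G f0 u).
Local Notation d u := (bil G f1 u).

Lemma plane_gram u v : in_plane u -> in_plane v -> bil G u v = c u * c v + d u * d v.
Proof.
move=> hu hv; rewrite {1}hu {1}hv.
rewrite bilD1 !bilD2 !bilZ1 !bilZ2 h00 h11 h01 [bil G f1 f0]hsym h01; ring.
Qed.

Lemma alt_form_plane (beta : 'cV[R]_n -> 'cV[R]_n -> R) u v :
  (forall v, lin (beta^~ v)) -> (forall u, lin (beta u)) ->
  (forall u v, beta u v = - beta v u) -> in_plane u -> in_plane v ->
  beta u v = (c u * d v - d u * c v) * beta f0 f1.
Proof.
move=> h1 h2 halt hu hv.
have diag w : beta w w = 0 by have := halt w w; lra.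
rewrite {1}hu {1}hv (linD (h1 _)) !(linD (h2 _)) !(linZ _ _ (h1 _)) !(linZ _ _ (h2 _)).
rewrite !diag [beta f1 f0]halt; ring.
Qed.

Lemma curvature_plane (Lc : 'I_n -> 'I_n -> 'I_n -> 'I_n -> R) u1 u2 u3 u4 :
  curvature_like Lc ->
  in_plane u1 -> in_plane u2 -> in_plane u3 -> in_plane u4 ->
  tens4 Lc u1 u2 u3 u4 = tens4 Lc f0 f1 f1 f0 * unit_curv G u1 u2 u3 u4.
Proof.
move=> [hA hB _] h1 h2 h3 h4.
rewrite (@alt_form_plane (fun x y => tens4 Lc x y u3 u4)) //; last first.
- by move=> x; exact: tens4_lin2.
- by move=> y; exact: tens4_lin1.
rewrite (@alt_form_plane (fun x y => tens4 Lc f0 f1 x y)) //; last first.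
- by move=> x; exact: tens4_lin4.
- by move=> y; exact: tens4_lin3.
rewrite [tens4 Lc f0 f1 f0 f1]hB /unit_curv !(plane_gram h1 h2, plane_gram h1 h3,
  plane_gram h1 h4, plane_gram h2 h3, plane_gram h2 h4); ring.
Qed.

Lemma unit_curv_trace_plane u v : in_plane u -> in_plane v ->
  unit_curv G f0 u v f0 + unit_curv G f1 u v f1 = bil G u v.
Proof.
move=> hu hv; rewrite /unit_curv h00 h11 !(hsym _ f0) !(hsym _ f1) (plane_gram hu hv).
ring.
Qed.

End Plane.

Definition basis4 (R : rcfType) (f0 f1 f2 f3 : 'cV[R]_4) : 'I_4 -> 'cV[R]_4 :=
  tnth [tuple f0; f1; f2; f3].

Lemma sum_basis4 (R : rcfType) (V : nmodType) (f0 f1 f2 f3 : 'cV[R]_4)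
    (F : 'cV[R]_4 -> V) :
  \sum_p F (basis4 f0 f1 f2 f3 p) = F f0 + F f1 + F f2 + F f3.
Proof. by rewrite !big_ord_recl big_ord0 addr0 !addrA. Qed.

Definition adapted_basis (R : rcfType) (G P : 'M[R]_4) (f0 f1 f2 f3 : 'cV[R]_4) :=
  fixed_pair G P f0 f1 /\ fixed_pair G (- P) f2 f3.

(* Since \tr P = 0 in dimension 4, both eigenspaces of P are planes. *)
Lemma adapted_basis_exists (R : rcfType) (G P : 'M[R]_4) :
  RAP_structure G P -> \tr P = 0 -> exists f0 f1 f2 f3, adapted_basis G P f0 f1 f2 f3.
Proof.
move=> hGP htr.
have htr1 (Q : 'M[R]_4) : \tr Q = 0 -> 2%:R < \tr (1%:M + Q).
  by move=> hQ; rewrite mxtraceD hQ mxtrace1 addr0 ltr_nat.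
have htrN : \tr (- P) = 0 by rewrite raddfN /= htr oppr0.
have [f0 [f1 h01]] := fixed_orthonormal_pair hGP (htr1 _ htr).
have [f2 [f3 h23]] := fixed_orthonormal_pair (RAP_opp hGP) (htr1 _ htrN).
by exists f0, f1, f2, f3.
Qed.

(* An adapted basis is orthonormal, V+ and V- being orthogonal. *)
Lemma adapted_orthonormal (R : rcfType) (G P : 'M[R]_4) (f0 f1 f2 f3 : 'cV[R]_4) :
  RAP_structure G P -> adapted_basis G P f0 f1 f2 f3 ->
  orthonormal_basis G (basis4 f0 f1 f2 f3).
Proof.
move=> hGP [[h0 h1 h00 h11 h01] [h2 h3 h22 h33 h23]].
have orth u v : P *m u = u -> - P *m v = v -> bil G u v = 0.
  by move=> hu hv; exact: (eigen_orth hGP hu (fixed_opp hv)).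
have o02 := orth _ _ h0 h2; have o03 := orth _ _ h0 h3.
have o12 := orth _ _ h1 h2; have o13 := orth _ _ h1 h3.
have sym := bil_sym hGP.
move=> p q; case: p => [[|[|[|[|//]]]] ?]; case: q => [[|[|[|[|//]]]] ?];
  rewrite /basis4 /tnth /=;
  by rewrite ?h00 ?h11 ?h22 ?h33 ?h01 ?h23 ?o02 ?o03 ?o12 ?o13 // sym
    ?h01 ?h23 ?o02 ?o03 ?o12 ?o13.
Qed.

Section Dim4.
Variables (R : rcfType) (G P : 'M[R]_4) (f0 f1 f2 f3 : 'cV[R]_4).
Variable Lc : 'I_4 -> 'I_4 -> 'I_4 -> 'I_4 -> R.
Hypotheses (hGP : RAP_structure G P) (hL : riemannian_P_tensor P Lc).
Hypothesis hf : adapted_basis G P f0 f1 f2 f3.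
Local Notation L := (tens4 Lc).
Local Notation pplus x := (projP P x).
Local Notation pminus x := (projP (- P) x).
Local Notation fb := (basis4 f0 f1 f2 f3).
Implicit Types (x y z w u : 'cV[R]_4).

Let hON : orthonormal_basis G fb := adapted_orthonormal hGP hf.
Let hPP : P *m P = 1%:M. Proof. by case: hGP. Qed.

Lemma fixed_in_plane u : P *m u = u -> in_plane G f0 f1 u.
Proof.
have [_ [h2 h3 _ _ _]] := hf; move=> hu.
rewrite /in_plane {1}(ortho_expand hON u).
rewrite (@sum_basis4 _ _ f0 f1 f2 f3 (fun v => bil G v u *: v)).
rewrite (bil_sym hGP f2) (bil_sym hGP f3) (eigen_orth hGP hu (fixed_opp h2)).
by rewrite (eigen_orth hGP hu (fixed_opp h3)) !scale0r !addr0.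
Qed.

Lemma anti_in_plane u : P *m u = - u -> in_plane G f2 f3 u.
Proof.
have [[h0 h1 _ _ _] _] := hf; move=> hu.
rewrite /in_plane {1}(ortho_expand hON u).
rewrite (@sum_basis4 _ _ f0 f1 f2 f3 (fun v => bil G v u *: v)).
by rewrite (eigen_orth hGP h0 hu) (eigen_orth hGP h1 hu) !scale0r !add0r.
Qed.

Lemma pplus_in_plane u : in_plane G f0 f1 (pplus u).
Proof. exact: fixed_in_plane (projP_fixed u hPP). Qed.

Lemma pminus_in_plane u : in_plane G f2 f3 (pminus u).
Proof. exact: anti_in_plane (projP_opp u hPP). Qed.

Lemma tens4_dim4 x y z w :
  L x y z w = L f0 f1 f1 f0 * unit_curv G (pplus x) (pplus y) (pplus z) (pplus w)
            + L f2 f3 f3 f2 * unit_curv G (pminus x) (pminus y) (pminus z) (pminus w).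
Proof.
have [[_ _ h00 h11 h01] [_ _ h22 h33 h23]] := hf; have sym := bil_sym hGP.
have hp := pplus_in_plane; have hm := pminus_in_plane.
rewrite (tens4_split hL hPP).
rewrite (curvature_plane sym h00 h11 h01 hL.1 (hp _) (hp _) (hp _) (hp _)).
by rewrite (curvature_plane sym h22 h33 h23 hL.1 (hm _) (hm _) (hm _) (hm _)).
Qed.

Lemma ricci_plus y z :
  L f0 y z f0 + L f1 y z f1 = L f0 f1 f1 f0 * bil G (pplus y) (pplus z).
Proof.
have [[h0 h1 h00 h11 h01] _] := hf.
have e u : L u y z u = _ := tens4_dim4 u y z u.
rewrite !e (projP_id h0) (projP_id h1) (projPN_anti h0) (projPN_anti h1) !unit_curv0.
rewrite -(unit_curv_trace_plane (bil_sym hGP) h00 h11 h01 (pplus_in_plane y)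
  (pplus_in_plane z)).
ring.
Qed.

Lemma ricci_minus y z :
  L f2 y z f2 + L f3 y z f3 = L f2 f3 f3 f2 * bil G (pminus y) (pminus z).
Proof.
have [_ [h2 h3 h22 h33 h23]] := hf.
have e u : L u y z u = _ := tens4_dim4 u y z u.
rewrite !e (projP_id h2) (projP_id h3).
rewrite (projP_anti (fixed_opp h2)) (projP_anti (fixed_opp h3)) !unit_curv0.
rewrite -(unit_curv_trace_plane (bil_sym hGP) h22 h33 h23 (pminus_in_plane y)
  (pminus_in_plane z)).
ring.
Qed.

Lemma ricci_dim4 y z :
  rho G Lc y z = L f0 f1 f1 f0 * bil G (pplus y) (pplus z)
               + L f2 f3 f3 f2 * bil G (pminus y) (pminus z).
Proof.
rewrite /rho (contraction hON (beta := fun u v => L u y z v)); first last.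
- by move=> u; exact: tens4_lin4.
- by move=> v; exact: tens4_lin1.
rewrite (@sum_basis4 _ _ f0 f1 f2 f3 (fun v => L v y z v)).
by rewrite -ricci_plus -ricci_minus !addrA.
Qed.

Lemma ricci_star_dim4 y z :
  rhostar G P Lc y z = L f0 f1 f1 f0 * bil G (pplus y) (pplus z)
                     - L f2 f3 f3 f2 * bil G (pminus y) (pminus z).
Proof.
have [[h0 h1 _ _ _] [h2 h3 _ _ _]] := hf.
rewrite /rhostar (contraction hON (beta := fun u v => L u y z (P *m v))); first last.
- by move=> u /=; exact: lin_compmx (tens4_lin4 _ _ _ _).
- by move=> v; exact: tens4_lin1.
rewrite (@sum_basis4 _ _ f0 f1 f2 f3 (fun v => L v y z (P *m v))) h0 h1.
rewrite (fixed_opp h2) (fixed_opp h3) !(linN _ (tens4_lin4 _ _ _ _)).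
by rewrite -ricci_plus -ricci_minus; ring.
Qed.

(* The traces of g+ and g- are both 2 = dim V+ = dim V-. *)
Lemma trace_dim4 (c d : R) :
  \sum_p (c * bil G (pplus (fb p)) (pplus (fb p)) + d * bil G (pminus (fb p)) (pminus (fb p)))
  = 2 * (c + d).
Proof.
have [[h0 h1 h00 h11 _] [h2 h3 h22 h33 _]] := hf.
rewrite (@sum_basis4 _ _ f0 f1 f2 f3
  (fun v => c * bil G (pplus v) (pplus v) + d * bil G (pminus v) (pminus v))) /=.
rewrite (projP_id h0) (projP_id h1) (projPN_anti h0) (projPN_anti h1).
rewrite (projP_id h2) (projP_id h3).
rewrite (projP_anti (fixed_opp h2)) (projP_anti (fixed_opp h3)) !bil0l h00 h11 h22 h33; ring.
Qed.

Lemma tau_dim4 : tau G Lc = 2 * (L f0 f1 f1 f0 + L f2 f3 f3 f2).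
Proof.
rewrite /tau (contraction hON (beta := rho G Lc)); first last.
- by move=> u; exact: (rho_lin G Lc u u).2.
- by move=> v; exact: (rho_lin G Lc v v).1.
under eq_bigr => p _ do rewrite ricci_dim4.
exact: trace_dim4.
Qed.

Lemma taustar_dim4 : taustar G P Lc = 2 * (L f0 f1 f1 f0 - L f2 f3 f3 f2).
Proof.
rewrite /taustar (contraction hON (beta := rhostar G P Lc)); first last.
- by move=> u; exact: (rhostar_lin G P Lc u u).2.
- by move=> v; exact: (rhostar_lin G P Lc v v).1.
under eq_bigr => p _ do rewrite ricci_star_dim4 -mulNr.
exact: trace_dim4.
Qed.

End Dim4.

Unset Implicit Arguments.

Theorem proposition3p3 (R : rcfType) (G P : 'M[R]_4)
  (Lc : 'I_4 -> 'I_4 -> 'I_4 -> 'I_4 -> R)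
  (hGP : RAP_structure G P) (htr : \tr P = 0)
  (hL : riemannian_P_tensor P Lc) :
  [/\ (forall y z : 'cV[R]_4,
         rho G Lc y z = (tau G Lc * bil G y z + taustar G P Lc * gtilde G P y z) / 4),
      (forall x y : 'cV[R]_4,
         bil G x x = 1 -> bil G y y = 1 -> bil G x y = 0 ->
         bil G x (P *m x) = 0 -> bil G x (P *m y) = 0 ->
         bil G y (P *m x) = 0 -> bil G y (P *m y) = 0 ->
         tens4 Lc x y y x = tau G Lc / 8) &
      (forall x : 'cV[R]_4,
         bil G x x = 1 -> bil G x (P *m x) = 0 ->
         tens4 Lc x (P *m x) (P *m x) x = 0)].
Proof.
have [f0 [f1 [f2 [f3 hf]]]] := adapted_basis_exists hGP htr.
have hPP : P *m P = 1%:M by case: hGP.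
have gplus := bil_projP hGP; have gminus := bil_projPN hGP.
rewrite (tau_dim4 hGP hL hf); split.
- move=> y z; rewrite (ricci_dim4 hGP hL hf) (taustar_dim4 hGP hL hf) gplus gminus.
  by field.
- move=> x y hxx hyy hxy hxPx hxPy hyPx hyPy.
  rewrite (tens4_dim4 hGP hL hf) /unit_curv !gplus !gminus /gtilde (bil_sym hGP y x).
  by rewrite hxx hyy hxy hxPx hxPy hyPx hyPy; field.
- by move=> x _ _; exact: tens4_invariant_plane hL hPP x.
Qed.
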